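(* Let $G$ be a connected graph with a pair of vertices of order $h$ and a marking $S$. Let $v,v'$ be two vertices of $G$ joined by exactly $e\geq 1$ edges, with weights $s$ and $s'$ where $s>s'$, and normalize the marking (by adding a constant vector) so that $s'=0$. Let $G'$ be the graph obtained from $G$ by thickening the edges between $v$ and $v'$. Then the number of spanning trees satisfies $|\Phi(G')|=s\,(es)^{s-1}\,|\Phi(G)|$.
   Context: Graphs are finite, connected, may have multiple edges, no loops. With $c_{ij}$ ($i\neq j$) the number of edges joining $v_i,v_j$, $c_{ii}=-\sum_{j\ne i}c_{ij}$ and $M(G)=(c_{ij})$, $\mathbb{Z}^n/\mathrm{Im}(M(G))\cong \mathbb{Z}\times\Phi(G)$ with $\Phi(G)$ finite, and $|\Phi(G)|$ equals the number of spanning trees of $G$. A pair $\{v_i,v_j\}$ has order $h>0$ if there is $S=(s_1,\dots,s_n)^t\in\mathbb{Z}^n$ with $M(G)S=h(e_i-e_j)$ and $\gcd(s_1-s_n,\dots,s_{n-1}-s_n)=1$; $S$ is a marking, $s_k$ the weight of $v_k$, and $S+\alpha(1,\dots,1)^t$ is also a marking. Thickening the $e$ edges between $v'$ (weight $s'$) and $v$ (weight $s>s'$): delete these edges, add new vertices $w_1,\dots,w_{s-s'-1}$, and with $w_0=v'$, $w_{s-s'}=v$, join $w_{k-1}$ and $w_k$ by $e(s-s')$ edges for $k=1,\dots,s-s'$. *)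

From mathcomp Require Import all_boot all_order all_algebra.
Set Implicit Arguments. Unset Strict Implicit. Unset Printing Implicit Defensive.
Import GRing.Theory Num.Theory.

(* A finite loopless multigraph on the vertex set 'I_m is given by its
   edge-multiplicity function c : 'I_m -> 'I_m -> nat (c i j = number of
   edges joining v_i and v_j). *)
Definition multigraph (m : nat) (c : 'I_m -> 'I_m -> nat) : Prop :=
  (forall i j, c i j = c j i) /\ (forall i, c i i = 0%N).

Definition mg_connected (m : nat) (c : 'I_m -> 'I_m -> nat) : Prop :=
  forall i j, connect [rel x y | (0 < c x y)%N] i j.

Definition lapM (m : nat) (c : 'I_m -> 'I_m -> nat) : 'M[int]_m :=
  \matrix_(i, j) (if i == j then (- Posz (\sum_(k | k != i) c i k)%N)%R
                  else Posz (c i j)).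

(* Edges of the multigraph: triples (i, j, k) with i < j and k < c i j
   (the k-th of the c i j parallel edges joining v_i and v_j). *)
Definition mg_bound (m : nat) (c : 'I_m -> 'I_m -> nat) : nat :=
  (\max_(p : 'I_m * 'I_m) c p.1 p.2)%N.

Definition edge_t (m : nat) (c : 'I_m -> 'I_m -> nat) : finType :=
  ('I_m * 'I_m * 'I_(mg_bound c))%type.

Definition is_edge (m : nat) (c : 'I_m -> 'I_m -> nat) (t : edge_t c) : bool :=
  (t.1.1 < t.1.2)%N && (t.2 < c t.1.1 t.1.2)%N.

Definition sub_adj (m : nat) (c : 'I_m -> 'I_m -> nat) (T : {set edge_t c}) :
  rel 'I_m :=
  fun x y => [exists t in T, ((t.1.1 == x) && (t.1.2 == y))
                          || ((t.1.1 == y) && (t.1.2 == x))].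

Definition spanning_tree (m : nat) (c : 'I_m -> 'I_m -> nat)
    (T : {set edge_t c}) : bool :=
  [&& T \subset [set t | is_edge t], #|T| == m.-1 &
      [forall x, forall y, connect (sub_adj T) x y]].

Definition num_spanning_trees (m : nat) (c : 'I_m -> 'I_m -> nat) : nat :=
  #|[set T : {set edge_t c} | spanning_tree T]|.

(* Thickening the edges between v' and v, where d = s - s' >= 1 and the
   e = c v v' edges are replaced by a path w_0 = v', w_1, ..., w_{d-1},
   w_d = v, consecutive vertices joined by e*d edges.  The new vertices
   w_1, ..., w_{d-1} are the vertices n, ..., n + d - 2 of 'I_(n + d.-1). *)
Definition thick_pos (n : nat) (v v' : 'I_n) (d : nat) (x : nat) : option nat :=
  if x == (v' : nat) then Some 0%N
  else if x == (v : nat) then Some d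
  else if (n <= x)%N then Some (x - n).+1
  else None.

Definition thicken (n : nat) (c : 'I_n -> 'I_n -> nat) (v v' : 'I_n) (d : nat) :
    'I_(n + d.-1) -> 'I_(n + d.-1) -> nat :=
  fun x y =>
    match thick_pos v v' d x, thick_pos v v' d y with
    | Some a, Some b => if (a.+1 == b) || (b.+1 == a) then (c v v' * d)%N else 0%N
    | _, _ =>
      match @insub _ (fun k => (k < n)%N) _ (val x),
            @insub _ (fun k => (k < n)%N) _ (val y) with
      | Some i, Some j => c (i : 'I_n) j
      | _, _ => 0%N
      end
    end.
Arguments thicken {n} c v v' d _ _.

(* Split the spanning trees of G according to the bundle of e parallel edges between v' and v:
   |Phi(G)| = alpha + e * beta, where alpha counts the trees avoiding the bundle and beta the
   edge sets R of the rest of G such that R plus one bundle edge is a tree.  In G' the bundle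
   is replaced by a path of s steps, each made of m = e s parallel edges.  A spanning tree of G'
   either uses exactly one edge of every step, its other edges then forming one of the beta
   sets, or misses exactly one step and uses one edge of every other step, its other edges
   then forming one of the alpha trees: two missing steps would cut off the path vertices
   between them, and any further path edge would exceed the number of edges of a tree.
   Hence |Phi(G')| = m^s beta + s m^(s-1) alpha = s (e s)^(s-1) |Phi(G)|.  The marking is
   only needed to provide s >= 1. *)

From mathcomp Require Import all_boot all_order all_algebra.
From mathcomp Require Import zify ring.
Set Implicit Arguments. Unset Strict Implicit. Unset Printing Implicit Defensive.

(** * Spanning trees of graphs with labelled edges *)

Definition joins (V : eqType) (p : V * V) (x y : V) : bool :=
  ((p.1 == x) && (p.2 == y)) || ((p.1 == y) && (p.2 == x)).

Section Joins.
Variable V : eqType.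
Implicit Types (p : V * V) (a b x y : V).

Lemma joinsC p x y : joins p x y = joins p y x.
Proof. by rewrite /joins orbC. Qed.

Lemma joins_refl a b : joins (a, b) a b.
Proof. by rewrite /joins !eqxx. Qed.

Lemma joins_swap a b : joins (a, b) b a.
Proof. by rewrite joinsC joins_refl. Qed.

Lemma joins_pairC a b x y : joins (a, b) x y = joins (x, y) a b.
Proof. by rewrite /joins /= !(eq_sym a) !(eq_sym b) [(x == b) && _]andbC. Qed.

Lemma joinsP a b x y : reflect (x = a /\ y = b \/ x = b /\ y = a) (joins (a, b) x y).
Proof.
rewrite /joins /=; apply: (iffP orP) => [[] /andP[/eqP-> /eqP->] | [] [-> ->]];
  by [left | right | left; rewrite !eqxx | right; rewrite !eqxx].
Qed.

Lemma joins_same_ends p a b x y : joins p a b -> joins p x y = joins (a, b) x y.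
Proof.
case: p => p1 p2 /joinsP[] [-> ->] //.
by rewrite /joins /= [RHS]orbC; congr orb; apply: andbC.
Qed.

Lemma joins_inj (W : eqType) (f : V -> W) a b x y :
  injective f -> joins (f a, f b) (f x) (f y) = joins (a, b) x y.
Proof. by move=> f_inj; rewrite /joins /= !(inj_eq f_inj). Qed.

End Joins.

Lemma connect_homo (V1 V2 : finType) (r1 : rel V1) (r2 : rel V2) (f : V1 -> V2) :
  (forall x y, r1 x y -> connect r2 (f x) (f y)) ->
  forall x y, connect r1 x y -> connect r2 (f x) (f y).
Proof.
move=> homo_f x y /connectP[p + ->]; elim: p x => //= z p IHp x /andP[r1xz r1p].
exact: connect_trans (homo_f _ _ r1xz) (IHp _ r1p).
Qed.

Lemma connect_forward_closed (V : finType) (r : rel V) (C : pred V) :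
  (forall z z', r z z' -> C z -> C z') ->
  forall x y, C x -> connect r x y -> C y.
Proof.
move=> closedC x y + /connectP[p + ->]; elim: p x => //= z p IHp x Cx /andP[rxz rp].
exact: IHp (closedC _ _ rxz Cx) rp.
Qed.

Definition connected (V : finType) (r : rel V) : bool :=
  [forall x, forall y, connect r x y].

Lemma connectedP (V : finType) (r : rel V) :
  reflect (forall x y, connect r x y) (connected r).
Proof. by apply: (iffP forallP) => conn_r x; apply/forallP; apply: conn_r. Qed.

Lemma eq_connected (V : finType) (r1 r2 : rel V) :
  r1 =2 r2 -> connected r1 = connected r2.
Proof.
move=> eq_r; apply/connectedP/connectedP => conn_r x y.
  by rewrite -(eq_connect eq_r).
by rewrite (eq_connect eq_r).
Qed.

Section EdgeGraph.
Variables (V E : finType) (ends : E -> V * V).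

Definition edge_adj (T : {set E}) : rel V :=
  fun x y => [exists t in T, joins (ends t) x y].

Definition is_tree (T : {set E}) : bool :=
  (#|T| == #|V|.-1) && connected (edge_adj T).

Definition num_trees : nat := #|[set T : {set E} | is_tree T]|.

Lemma edge_adj_sym T : symmetric (edge_adj T).
Proof. by move=> x y; apply: eq_existsb => t; rewrite joinsC. Qed.

Lemma edge_connect_sym T : connect_sym (edge_adj T).
Proof. exact/sym_connect_sym/edge_adj_sym. Qed.

End EdgeGraph.

Definition seq_adj (V : eqType) (s : seq (V * V)) : rel V :=
  fun x y => has (fun p => joins p x y) s.

Lemma seq_adj_sym (V : eqType) (s : seq (V * V)) : symmetric (seq_adj s).
Proof. by move=> x y; apply: eq_has => p; rewrite /= joinsC. Qed.

(* An added edge [p] only merges the classes of [p.1] and [p.2], so dropping the (at most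
   one) point of [X] connected to [p.2] keeps [X] pairwise disconnected. *)
Lemma exists_disconnected_set (V : finType) (s : seq (V * V)) :
  exists X : {set V}, #|V| <= #|X| + size s /\
    {in X &, forall x y, connect (seq_adj s) x y -> x = y}.
Proof.
elim: s => [|p s [X [leVX discX]]].
  exists setT; rewrite cardsT addn0; split=> // x y _ _.
  by case/connectP=> -[|z q] //= /andP[].
have symS : connect_sym (seq_adj s) by apply/sym_connect_sym/seq_adj_sym.
pose B := [set x in X | connect (seq_adj s) x p.2].
have cardB : #|B| <= 1.
  apply/card_le1_eqP => x y; rewrite !inE => /andP[xX xp] /andP[yX yp].
  by apply: discX => //; apply: (connect_trans yp); rewrite symS.
exists (X :\: B); split.
  have subBX : B \subset X by apply/subsetP => x; rewrite inE => /andP[].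
  rewrite cardsD (setIidPr subBX) [size _]/=; clearbody B; lia.
have discB x y : x \in X :\: B -> y \in X :\: B -> ~~ connect (seq_adj s) x p.1 ->
    connect (seq_adj (p :: s)) x y -> x = y.
  rewrite !inE => /andP[xB xX] /andP[_ yX] xp1 cxy; apply: discX => //.
  have xp2 : ~~ connect (seq_adj s) x p.2 by move: xB; rewrite xX.
  apply: connect_forward_closed cxy => // z z' /orP[pzz' | szz'] cxz.
    case/orP: pzz' => /andP[/eqP p1z /eqP p2z].
      by move: xp1; rewrite p1z cxz.
    by move: xp2; rewrite p2z cxz.
  exact/(connect_trans cxz)/connect1.
move=> x y xXB yXB cxy.
have symS' : connect_sym (seq_adj (p :: s)) by apply/sym_connect_sym/seq_adj_sym.
have [xp1|xp1] := boolP (connect (seq_adj s) x p.1); last exact: discB xp1 cxy.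
have [yp1|yp1] := boolP (connect (seq_adj s) y p.1); last first.
  by symmetry; apply: discB yp1 _ => //; rewrite symS'.
move: xXB yXB; rewrite !inE => /andP[_ xX] /andP[_ yX].
by apply: discX => //; apply: (connect_trans xp1); rewrite symS.
Qed.

Lemma connected_card_edges (V E : finType) (ends : E -> V * V) (T : {set E}) :
  (forall x y, connect (edge_adj ends T) x y) -> #|V| <= #|T|.+1.
Proof.
move=> connT; have [X []] := exists_disconnected_set [seq ends t | t <- enum T].
rewrite size_map -cardE => leVX discX.
suff : #|X| <= 1 by lia.
apply/card_le1_eqP => x y xX yX; apply: discX => //.
rewrite -(@eq_connect _ (edge_adj ends T)) // => a b.
rewrite /seq_adj has_map; apply/existsP/hasP => [[t /andP[tT ?]] | [t tT ?]].
  by exists t; rewrite ?mem_enum.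
by exists t; rewrite -mem_enum tT.
Qed.

(** * Counting sets of edges *)

Lemma sum_nat_of_bool (T : finType) (P : pred T) :
  \sum_x (P x : nat) = #|[set x | P x]|.
Proof. by rewrite -sum1dep_card [RHS]big_mkcond; apply: eq_bigr => x _; case: (P x). Qed.

Lemma set1_neq0 (T : finType) (x : T) : [set x] != set0.
Proof. by apply/set0Pn; exists x; rewrite inE. Qed.

Lemma card_singletons (T : finType) : #|[set B : {set T} | #|B| == 1]| = #|T|.
Proof.
rewrite -cardsT -(card_imset [set: T] (@set1_inj T)); apply: eq_card => B.
by rewrite !inE; apply/cards1P/imsetP => [[x ->] | [x _ ->]]; exists x.
Qed.

Section DisjointUnion.
Variables A B : finType.

Definition uplus (R : {set A}) (L : {set B}) : {set A + B} := inl @: R :|: inr @: L.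

Lemma mem_uplus_inl R L a : (inl a \in uplus R L) = (a \in R).
Proof.
rewrite inE; apply/orP/idP => [[/imsetP[a' a'R [->]] // | /imsetP[]] // | aR].
by left; apply: imset_f.
Qed.

Lemma mem_uplus_inr R L b : (inr b \in uplus R L) = (b \in L).
Proof.
rewrite inE; apply/orP/idP => [[/imsetP[] | /imsetP[b' b'L [->]]] // | bL].
by right; apply: imset_f.
Qed.

Lemma card_uplus R L : #|uplus R L| = #|R| + #|L|.
Proof.
rewrite cardsU !card_imset; try by move=> x y [].
suff -> : inl @: R :&: inr @: L = set0 by rewrite cards0 subn0.
by apply/setP => x; rewrite !inE; apply/andP => -[/imsetP[? _ ->] /imsetP[]].
Qed.

Lemma card_set_uplus (P : pred {set A + B}) :
  #|[set T | P T]| = \sum_(L : {set B}) #|[set R : {set A} | P (uplus R L)]|.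
Proof.
rewrite -sum1dep_card (reindex (fun p : {set A} * {set B} => uplus p.1 p.2)) /=.
  rewrite -(pair_big_dep xpredT (fun R L => P (uplus R L)) (fun _ _ => 1)) /=.
  rewrite (exchange_big_dep xpredT) //=.
  by apply: eq_bigr => L _; rewrite sum1dep_card.
exists (fun T : {set A + B} => ([set a | inl a \in T], [set b | inr b \in T])) => [[R L] _ | T _].
  by congr (_, _); apply/setP => x; rewrite inE ?mem_uplus_inl ?mem_uplus_inr.
by apply/setP => -[a|b]; rewrite ?mem_uplus_inl ?mem_uplus_inr inE.
Qed.

End DisjointUnion.

Section Fibers.
Variables I J : finType.
Implicit Types (D : {set I}) (L : {set I * J}).

Definition fiber_card L (k : I) : nat := #|[set j | (k, j) \in L]|.

Definition exact_fibers D L : bool := [forall k, fiber_card L k == (k \in D)].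

Lemma exact_fibersP D L : reflect (forall k, fiber_card L k = (k \in D)) (exact_fibers D L).
Proof. by apply: (iffP forallP) => H k; apply/eqP; apply: H. Qed.

Lemma exact_fibers_inj D D' L : exact_fibers D L -> exact_fibers D' L -> D = D'.
Proof.
move=> /exact_fibersP fibD /exact_fibersP fibD'; apply/setP => k.
by have := fibD k; rewrite fibD'; case: (k \in D); case: (k \in D').
Qed.

Lemma sum_exact_fibers_setC1 L :
  \sum_k0 (exact_fibers [set~ k0] L : nat) = [exists k0, exact_fibers [set~ k0] L].
Proof.
case: existsP => [[k0 fib0] | no_gap]; last first.
  by rewrite big1 // => k0 _; case: (boolP (exact_fibers _ L)) => // fib0; case: no_gap; exists k0.
rewrite (bigD1 k0) //= fib0 big1 // => k k_neq; apply/eqP; rewrite eqb0.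
apply: contra k_neq => /(exact_fibers_inj fib0)/setP/(_ k).
by rewrite !inE eqxx => /negbFE.
Qed.

Lemma card_fibers L : #|L| = \sum_k fiber_card L k.
Proof.
rewrite -sum1_card (eq_bigl (fun p : I * J => (p.1, p.2) \in L)) => [|[] //].
rewrite -(pair_big_dep xpredT (fun k j => (k, j) \in L) (fun _ _ => 1)) /=.
by apply: eq_bigr => k _; rewrite sum1dep_card.
Qed.

Lemma card_exact_fibers D L : exact_fibers D L -> #|L| = #|D|.
Proof.
move/exact_fibersP => fibL; rewrite card_fibers (eq_bigr _ (fun k _ => fibL k)).
by rewrite sum_nat_of_bool; apply: eq_card => k; rewrite inE.
Qed.

Lemma exact_fibers_of_le D L :
  (forall k, k \in D -> 0 < fiber_card L k) -> #|L| <= #|D| -> exact_fibers D L.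
Proof.
move=> fibD cardL.
have ge_fib k : (k \in D : nat) <= fiber_card L k by case: (boolP (k \in D)) => // /fibD.
have [] := @leqif_sum _ xpredT (fun k => (k \in D : nat) == fiber_card L k) _ _
  (fun k _ => leqif_eq (ge_fib k)).
have sumD : \sum_(k | xpredT k) (k \in D : nat) = #|D|.
  by rewrite sum_nat_of_bool; apply: eq_card => k; rewrite inE.
rewrite sumD -card_fibers => le_DL; rewrite eqn_leq cardL le_DL => /esym/forallP fibL.
by apply/exact_fibersP => k; apply/esym/eqP/fibL.
Qed.

Definition ograph (f : {ffun I -> option J}) : {set I * J} := [set p | f p.1 == Some p.2].

Definition ograph_inv L : {ffun I -> option J} := [ffun k => [pick j | (k, j) \in L]].

Lemma ographK : cancel ograph ograph_inv.
Proof.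
move=> f; apply/ffunP => k; rewrite ffunE.
case: pickP => [j | no_j]; first by rewrite inE => /eqP->.
by case Efk: (f k) => [j|] //; have := no_j j; rewrite inE Efk eqxx.
Qed.

Lemma fiber_card_ograph f k : fiber_card (ograph f) k = (f k != None).
Proof.
rewrite /fiber_card; case Efk: (f k) => [j|] /=; last first.
  by apply: eq_card0 => j; rewrite !inE /= Efk.
by apply/eqP/cards1P; exists j; apply/setP => j'; rewrite !inE /= Efk eq_sym.
Qed.

Lemma ograph_invK D L : exact_fibers D L -> ograph (ograph_inv L) = L.
Proof.
move/exact_fibersP => fibL; apply/setP => -[k j]; rewrite inE ffunE /=.
case: pickP => [j' j'L | no_j]; last by rewrite no_j.
apply/eqP/idP => [[<-] // | jL]; congr Some.
have : fiber_card L k <= 1 by rewrite fibL; case: (k \in D).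
by move/card_le1_eqP/(_ j' j); rewrite !inE => /(_ j'L jL).
Qed.

Lemma exact_fibers_ograph D f :
  exact_fibers D (ograph f) = (f \in pffun_on None D [pred o | o != None]).
Proof.
apply/exact_fibersP/pffun_onP => [fib_f | [/subsetP supp_f im_f] k].
  have some_f k : (f k != None) = (k \in D).
    by have := fib_f k; rewrite fiber_card_ograph; case: (f k != None); case: (k \in D).
  split=> [|_ /imageP[k kD ->]]; last by rewrite inE some_f.
  by apply/subsetP => k; rewrite inE some_f.
rewrite fiber_card_ograph; case: (boolP (k \in D)) => [kD | kND].
  by have := im_f _ (image_f f kD); rewrite inE => ->.
by apply/eqP; case Efk: (f k) (supp_f k) => //; rewrite inE Efk (negbTE kND) => /(_ isT).
Qed.

Lemma card_set_exact_fibers D : #|[set L | exact_fibers D L]| = #|J| ^ #|D|.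
Proof.
have card_some : #|[pred o : option J | o != None]| = #|J|.
  by rewrite (cardC1 None) card_option.
rewrite -card_some -(card_pffun_on None) -(card_imset _ (can_inj ographK)).
apply: eq_card => L; rewrite inE; apply/idP/imsetP => [fibL | [f f_on ->]].
  exists (ograph_inv L); last by rewrite (ograph_invK fibL).
  by rewrite -exact_fibers_ograph (ograph_invK fibL).
by rewrite exact_fibers_ograph.
Qed.

End Fibers.

(** * Thickening a bundle of parallel edges *)

(* [G] has edges [A + 'I_e], where [inr b] are the [e] parallel edges joining [u'] and [u].
   [G'] has the vertices [emb x] and the path [w 0 = emb u', w 1, ..., w d = emb u] whose
   inner vertices are the new ones ([pos] reads off their index), and edges [A + 'I_d * 'I_m],
   where [inr (k, j)] joins [w k] and [w k.+1]. *)
Section Thickening.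
Variables (V V' A : finType) (u u' : V) (e d m : nat).
Variables (ends_rest : A -> V * V) (ends : A + 'I_e -> V * V).
Variable ends' : A + ('I_d * 'I_m) -> V' * V'.
Variables (emb : V -> V') (emb_inv : V' -> V) (w : nat -> V') (pos : V' -> nat).
Hypotheses (u'u : u' != u) (e_gt0 : 0 < e) (d_gt0 : 0 < d).
Hypothesis embK : cancel emb emb_inv.
Hypotheses (w0 : w 0 = emb u') (wd : w d = emb u).
Hypothesis new_on_path :
  forall y, emb (emb_inv y) != y -> 0 < pos y < d /\ w (pos y) = y.
Hypothesis path_new :
  forall k, 0 < k < d -> emb (emb_inv (w k)) != w k /\ pos (w k) = k.
Hypotheses (ends_inl : forall a, ends (inl a) = ends_rest a)
           (ends_inr : forall b, joins (ends (inr b)) u' u).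
Hypotheses (ends'_inl : forall a, ends' (inl a) = (emb (ends_rest a).1, emb (ends_rest a).2))
           (ends'_inr : forall k j, joins (ends' (inr (k, j))) (w k) (w k.+1)).
Hypothesis card_V' : #|V'| = #|V| + d.-1.

Let b0 : 'I_e := Ordinal e_gt0.

Definition is_old (y : V') : bool := emb (emb_inv y) == y.

Lemma is_old_emb x : is_old (emb x).
Proof. by rewrite /is_old embK. Qed.

Lemma w_cases k : k <= d ->
  [\/ k = 0 /\ w k = emb u', k = d /\ w k = emb u | 0 < k < d /\ ~~ is_old (w k)].
Proof.
case: k => [|k] le_kd; first by constructor 1.
have [lt_kd | | ->] := ltngtP k.+1 d; last by constructor 2.
- by constructor 3; have [] := path_new (_ : 0 < k.+1 < d) => //; rewrite lt_kd.
- by rewrite ltnNge le_kd.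
Qed.

Lemma pos_w_new k : k <= d -> ~~ is_old (w k) -> 0 < k < d /\ pos (w k) = k.
Proof.
move=> le_kd; case: (w_cases le_kd) => [[_ ->] | [_ ->] | [lt_kd _]];
  rewrite ?is_old_emb // => _.
by have [_ ->] := path_new lt_kd.
Qed.

Definition used (L : {set 'I_d * 'I_m}) (k : 'I_d) : bool := 0 < fiber_card L k.

Notation conn R B := (connect (edge_adj ends (uplus R B))).
Notation conn' R L := (connect (edge_adj ends' (uplus R L))).

Lemma edge_adj_uplus R B x y :
  edge_adj ends (uplus R B) x y =
  edge_adj ends_rest R x y || (B != set0) && joins (u', u) x y.
Proof.
apply/existsP/orP => [[[a|b] /andP[abR ab_xy]] | [/existsP[a /andP[aR a_xy]] | /andP[]]].
- by left; apply/existsP; exists a; rewrite -(mem_uplus_inl R B) abR -ends_inl.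
- right; rewrite -(joins_same_ends _ _ (ends_inr b)) ab_xy andbT.
  by apply/set0Pn; exists b; rewrite -(mem_uplus_inr R).
- by exists (inl a); rewrite mem_uplus_inl aR ends_inl.
- case/set0Pn=> b bB u'u_xy; exists (inr b).
  by rewrite mem_uplus_inr bB (joins_same_ends _ _ (ends_inr b)).
Qed.

Lemma edge_adj'_uplus R L x y :
  edge_adj ends' (uplus R L) x y =
  [exists a in R, joins (emb (ends_rest a).1, emb (ends_rest a).2) x y] ||
  [exists k, used L k && joins (w k, w k.+1) x y].
Proof.
apply/existsP/orP => [[[a|[k j]] /andP[akjRL akj_xy]] |
                      [/existsP[a /andP[aR a_xy]] | /existsP[k /andP[/card_gt0P[j] kjL k_xy]]]].
- by left; apply/existsP; exists a; rewrite -(mem_uplus_inl R L) akjRL -ends'_inl.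
- right; apply/existsP; exists k; rewrite -(joins_same_ends _ _ (ends'_inr k j)) akj_xy andbT.
  by apply/card_gt0P; exists j; rewrite inE -(mem_uplus_inr R).
- by exists (inl a); rewrite mem_uplus_inl aR ends'_inl.
- move: kjL; rewrite inE => kjL.
  by exists (inr (k, j)); rewrite mem_uplus_inr kjL (joins_same_ends _ _ (ends'_inr k j)).
Qed.

Lemma connect_contract R L B (phi : V' -> V) :
  (forall x, phi (emb x) = x) ->
  (forall k, used L k -> phi (w k) = phi (w k.+1) \/
                         B != set0 /\ joins (u', u) (phi (w k)) (phi (w k.+1))) ->
  forall x y, conn' R L x y -> conn R B (phi x) (phi y).
Proof.
move=> phiK phi_path; apply: connect_homo => x y; rewrite edge_adj'_uplus.
case/orP=> [/existsP[a /andP[aR /joinsP[] [-> ->]]] | /existsP[k /andP[kL]]].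
- by apply: connect1; rewrite edge_adj_uplus !phiK; apply/orP; left;
     apply/existsP; exists a; rewrite aR; case: (ends_rest a) => ? ?; rewrite joins_refl.
- by apply: connect1; rewrite edge_adj_uplus !phiK; apply/orP; left;
     apply/existsP; exists a; rewrite aR; case: (ends_rest a) => ? ?; rewrite joins_swap.
have contract_edge : conn R B (phi (w k)) (phi (w k.+1)).
  case: (phi_path k kL) => [-> | [BN0 u'u_k]]; first exact: connect0.
  by apply: connect1; rewrite edge_adj_uplus BN0 u'u_k orbT.
by case/joinsP=> -[-> ->] //; rewrite edge_connect_sym.
Qed.

Definition collapse (y : V') : V := if is_old y then emb_inv y else u.

Definition cut (k0 : nat) (y : V') : V :=
  if is_old y then emb_inv y else if pos y <= k0 then u' else u.

Lemma collapse_emb x : collapse (emb x) = x.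
Proof. by rewrite /collapse is_old_emb embK. Qed.

Lemma cut_emb k0 x : cut k0 (emb x) = x.
Proof. by rewrite /cut is_old_emb embK. Qed.

Lemma collapse_w k : k <= d -> collapse (w k) = if k == 0 then u' else u.
Proof.
move=> le_kd; case: (w_cases le_kd) => [[-> ->] | [-> ->] | [lt_kd new_k]].
- by rewrite collapse_emb.
- by rewrite collapse_emb gtn_eqF.
- by rewrite /collapse (negbTE new_k) gtn_eqF //; case/andP: lt_kd.
Qed.

Lemma cut_w k0 k : k0 < d -> k <= d -> cut k0 (w k) = if k <= k0 then u' else u.
Proof.
move=> lt_k0d le_kd; case: (w_cases le_kd) => [[-> ->] | [-> ->] | [_ new_k]].
- by rewrite cut_emb.
- by rewrite cut_emb leqNgt lt_k0d.
- by rewrite /cut (negbTE new_k); have [_ ->] := pos_w_new le_kd new_k.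
Qed.

Lemma connect_along_path R L i j : i <= j <= d ->
  (forall k : 'I_d, i <= k < j -> used L k) -> conn' R L (w i) (w j).
Proof.
elim: j => [|j IHj] /andP[le_ij le_jd] usedL.
  by move: le_ij; rewrite leqn0 => /eqP->.
have [lt_ij | | ->] := ltngtP i j.+1; last exact: connect0; last by rewrite ltnNge le_ij.
have conn_ij : conn' R L (w i) (w j).
  apply: IHj => [|k /andP[le_ik lt_kj]]; first by rewrite -ltnS lt_ij (ltnW le_jd).
  by apply: usedL; rewrite le_ik ltnW.
apply: (connect_trans conn_ij); apply: connect1; rewrite edge_adj'_uplus.
apply/orP; right; apply/existsP; exists (Ordinal le_jd).
by rewrite joins_refl andbT usedL //= -ltnS lt_ij /=.
Qed.

Lemma unused_pair_disconnects R L (k1 k2 : 'I_d) :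
  k1 < k2 -> ~~ used L k1 -> ~~ used L k2 -> ~~ conn' R L (w k2) (w 0).
Proof.
move=> lt_k12 unused1 unused2; apply/negP.
(* The new vertices between the two gaps cannot leave that stretch of the path. *)
pose C y := ~~ is_old y && (k1 < pos y <= k2).
have Cw k : k1 < k <= k2 -> C (w k).
  move=> range_k; have lt_kd : 0 < k < d by have := ltn_ord k2; lia.
  by have [new_k pos_k] := path_new lt_kd; rewrite /C /is_old pos_k new_k range_k.
have C_closed z z' : edge_adj ends' (uplus R L) z z' -> C z -> C z'.
  rewrite edge_adj'_uplus.
  case/orP=> [/existsP[a /andP[_ /joinsP[] [-> _]]] | /existsP[k /andP[kL /joinsP[] [-> ->]]]];
    rewrite {1}/C ?is_old_emb // => /andP[new_k].
  - have [_ ->] := pos_w_new (ltnW (ltn_ord k)) new_k => range_k.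
    have : (k : nat) != k2 by apply: contraNneq unused2 => /val_inj <-.
    by move=> *; apply: Cw; lia.
  - have [_ ->] := pos_w_new (ltn_ord k) new_k => range_k.
    have : (k : nat) != k1 by apply: contraNneq unused1 => /val_inj <-.
    by move=> *; apply: Cw; lia.
have Ck2 : C (w k2) by apply: Cw; rewrite lt_k12 leqnn.
by move/(connect_forward_closed C_closed Ck2); rewrite w0 /C is_old_emb.
Qed.

Lemma connect_expand R L B : (B != set0 -> conn' R L (emb u') (emb u)) ->
  forall x y, conn R B x y -> conn' R L (emb x) (emb y).
Proof.
move=> conn_u'u; apply: connect_homo => x y; rewrite edge_adj_uplus.
case/orP=> [/existsP[a /andP[aR a_xy]] | /andP[BN0 /joinsP[] [-> ->]]].
- apply: connect1; rewrite edge_adj'_uplus; apply/orP; left; apply/existsP; exists a.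
  case: (ends_rest a) a_xy => a1 a2 a_xy; rewrite aR joins_inj //.
  exact: can_inj embK.
- exact: conn_u'u.
- by rewrite edge_connect_sym; apply: conn_u'u.
Qed.

Lemma connected_of_old R L :
  (forall x y, conn' R L (emb x) (emb y)) ->
  (forall k, 0 < k < d -> exists x, conn' R L (emb x) (w k)) ->
  forall y1 y2, conn' R L y1 y2.
Proof.
move=> conn_old conn_new.
have from_old y : exists x, conn' R L (emb x) y.
  have [y_old | y_new] := boolP (is_old y).
    by exists (emb_inv y); rewrite (eqP y_old) connect0.
  by have [lt_pos <-] := new_on_path y_new; apply: conn_new.
move=> y1 y2; have [x1 conn1] := from_old y1; have [x2 conn2] := from_old y2.
rewrite edge_connect_sym in conn1.
exact: connect_trans conn1 (connect_trans (conn_old x1 x2) conn2).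
Qed.

Lemma card_V_gt1 : 1 < #|V|.
Proof. by apply/card_gt1P; exists u', u. Qed.

Lemma collapse_connected R L :
  (forall x y, conn' R L x y) -> forall x y, conn R [set b0] x y.
Proof.
move=> connRL x y; rewrite -(collapse_emb x) -(collapse_emb y).
apply: connect_contract (connRL _ _) => [|k _]; first exact: collapse_emb.
have lt_kd := ltn_ord k; rewrite !collapse_w ?(ltnW lt_kd) //=.
case: (nat_of_ord k == 0); [right | by left].
by rewrite set1_neq0 joins_refl.
Qed.

Lemma cut_connected R L (k0 : 'I_d) : ~~ used L k0 ->
  (forall x y, conn' R L x y) -> forall x y, conn R set0 x y.
Proof.
move=> unused0 connRL x y; rewrite -(cut_emb k0 x) -(cut_emb k0 y).
apply: connect_contract (connRL _ _) => [|k kL]; first exact: cut_emb.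
have nk0 : (k : nat) != k0 by apply: contraNneq unused0 => /val_inj <-.
have lt_kd := ltn_ord k; rewrite !cut_w ?(ltnW lt_kd) ?ltn_ord //.
by left; rewrite leq_eqVlt (negbTE nk0).
Qed.

Lemma tree_uplus_full R L : exact_fibers setT L ->
  is_tree ends' (uplus R L) = is_tree ends (uplus R [set b0]).
Proof.
move=> fibL; have V_gt1 := card_V_gt1.
rewrite /is_tree !card_uplus (card_exact_fibers fibL) cardsT card_ord cards1 card_V'.
congr andb; first by apply/eqP/eqP; lia.
have usedL k : used L k by rewrite /used (exact_fibersP _ _ fibL) inE.
apply/connectedP/connectedP => [connRL | connRb0]; first exact: collapse_connected.
apply: connected_of_old => [x y | k /andP[_ lt_kd]].
  apply: connect_expand (connRb0 x y) => _; rewrite -w0 -wd.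
  by apply: connect_along_path => [|k _]; rewrite ?leqnn.
by exists u'; rewrite -w0; apply: connect_along_path => [|k' _]; rewrite ?(ltnW lt_kd).
Qed.

Lemma tree_uplus_gap R L (k0 : 'I_d) : exact_fibers [set~ k0] L ->
  is_tree ends' (uplus R L) = is_tree ends (uplus R set0).
Proof.
move=> fibL; have V_gt1 := card_V_gt1.
rewrite /is_tree !card_uplus (card_exact_fibers fibL) cardsC1 card_ord cards0 card_V'.
congr andb; first by apply/eqP/eqP; lia.
have usedL k : used L k = (k != k0).
  by rewrite /used (exact_fibersP _ _ fibL) !inE; case: (k != k0).
apply/connectedP/connectedP => [connRL | connR].
  by apply: (cut_connected (k0 := k0)) connRL; rewrite usedL eqxx.
apply: connected_of_old => [x y | k /andP[_ lt_kd]].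
  by apply: connect_expand (connR x y); rewrite eqxx.
have [le_kk0 | lt_k0k] := leqP k k0.
  exists u'; rewrite -w0; apply: connect_along_path => [|k' /andP[_ lt_k'k]].
    by rewrite (ltnW lt_kd).
  by rewrite usedL; apply: contraTneq lt_k'k => ->; rewrite -leqNgt.
exists u; rewrite -wd edge_connect_sym; apply: connect_along_path => [|k' /andP[le_kk' _]].
  by rewrite (ltnW lt_kd) leqnn.
by rewrite usedL; apply: contraTneq le_kk' => ->; rewrite -ltnNge.
Qed.

Lemma tree_uplus_other R L :
  ~~ exact_fibers setT L -> (forall k0, ~~ exact_fibers [set~ k0] L) ->
  ~~ is_tree ends' (uplus R L).
Proof.
move=> not_full not_gap; apply/negP => /andP[/eqP cardRL /connectedP connRL].
have V_gt1 := card_V_gt1; rewrite card_uplus card_V' in cardRL.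
set l := #|L| in cardRL.
pose Z := [set k | ~~ used L k].
have [/card_gt1P[k1 [k2 [Zk1 Zk2 k12]]] | Z_le1] := ltnP 1 #|Z|.
  rewrite !inE in Zk1 Zk2; have [lt12 | lt21 | /val_inj eq12] := ltngtP k1 k2.
  - by move: (unused_pair_disconnects R lt12 Zk1 Zk2); rewrite connRL.
  - by move: (unused_pair_disconnects R lt21 Zk2 Zk1); rewrite connRL.
  - by rewrite eq12 eqxx in k12.
have [Z0 | Z_gt0] := posnP #|Z|.
  have := connected_card_edges (collapse_connected connRL).
  rewrite card_uplus cards1 => cardR; have le_Ld : l <= d by lia.
  case/negP: not_full; apply: exact_fibers_of_le => [k _ | ]; last by rewrite cardsT card_ord.
  by have := card0_eq Z0 k; rewrite !inE => /negbFE.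
have /cards1P[k0 Zk0] : #|Z| == 1 by rewrite eqn_leq Z_le1 Z_gt0.
have unused0 : ~~ used L k0 by have := set11 k0; rewrite -Zk0 inE.
have := connected_card_edges (cut_connected unused0 connRL).
rewrite card_uplus cards0 => cardR; have le_Ld : l <= d.-1 by lia.
case/negP: (not_gap k0); apply: exact_fibers_of_le => [k | ]; last by rewrite cardsC1 card_ord.
rewrite !inE => nk0; have : k \notin Z by rewrite Zk0 inE.
by rewrite inE negbK.
Qed.

Lemma tree_uplus_bundle R B : B != set0 ->
  is_tree ends (uplus R B) = (#|B| == 1) && is_tree ends (uplus R [set b0]).
Proof.
move=> BN0; have V_gt1 := card_V_gt1.
have same_adj : edge_adj ends (uplus R B) =2 edge_adj ends (uplus R [set b0]).
  by move=> x y; rewrite !edge_adj_uplus BN0 set1_neq0.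
rewrite /is_tree (eq_connected same_adj).
have [/connectedP connRb0 | _] := boolP (connected _); last by rewrite !andbF.
have := connected_card_edges connRb0; rewrite !andbT !card_uplus cards1 => cardR.
have B_gt0 : 0 < #|B| by rewrite card_gt0.
by apply/eqP/andP => [? | [/eqP ? /eqP ?]]; [split; apply/eqP | ]; lia.
Qed.

Definition trees_avoiding_bundle : nat := #|[set R | is_tree ends (uplus R set0)]|.
Definition trees_through_bundle : nat := #|[set R | is_tree ends (uplus R [set b0])]|.

Lemma card_trees_uplus_bundle B :
  #|[set R | is_tree ends (uplus R B)]| =
  (B == set0) * trees_avoiding_bundle + (#|B| == 1) * trees_through_bundle.
Proof.
have [-> | BN0] := eqVneq B set0; first by rewrite cards0 mul1n addn0.
rewrite mul0n add0n; have [B1 | B_neq1] := boolP (#|B| == 1).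
  by rewrite mul1n; apply: eq_card => R; rewrite !inE tree_uplus_bundle // B1.
by rewrite mul0n; apply: eq_card0 => R; rewrite !inE tree_uplus_bundle // (negbTE B_neq1).
Qed.

Lemma num_trees_bundle :
  num_trees ends = trees_avoiding_bundle + e * trees_through_bundle.
Proof.
rewrite /num_trees card_set_uplus (eq_bigr _ (fun B _ => card_trees_uplus_bundle B)).
rewrite big_split /= -!big_distrl /= !sum_nat_of_bool card_singletons card_ord.
rewrite (_ : [set B : {set 'I_e} | B == set0] = [set set0]); last first.
  by apply/setP => B; rewrite !inE.
by rewrite cards1 mul1n mulnC.
Qed.

Lemma card_trees_uplus_path L :
  #|[set R | is_tree ends' (uplus R L)]| =
  exact_fibers setT L * trees_through_bundle +
  (\sum_k0 (exact_fibers [set~ k0] L : nat)) * trees_avoiding_bundle.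
Proof.
rewrite sum_exact_fibers_setC1; have [full | not_full] := boolP (exact_fibers setT L).
  rewrite (_ : [exists _, _] = false) ?mul0n ?addn0 ?mul1n; last first.
    by apply/existsP => -[k0 /(exact_fibers_inj full)/setP/(_ k0)]; rewrite !inE eqxx.
  by apply: eq_card => R; rewrite !inE tree_uplus_full.
rewrite mul0n add0n; case: existsP => [[k0 fib0] | no_gap].
  by rewrite mul1n; apply: eq_card => R; rewrite !inE (tree_uplus_gap _ fib0).
rewrite mul0n; apply: eq_card0 => R; rewrite !inE; apply/negbTE/tree_uplus_other => // k0.
by apply/negP => fib0; apply: no_gap; exists k0.
Qed.

Lemma num_trees_path :
  num_trees ends' = m ^ d * trees_through_bundle + d * m ^ d.-1 * trees_avoiding_bundle.
Proof.
rewrite /num_trees card_set_uplus (eq_bigr _ (fun L _ => card_trees_uplus_path L)).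
rewrite big_split /= -!big_distrl /= sum_nat_of_bool card_set_exact_fibers cardsT !card_ord.
rewrite exchange_big /= (eq_bigr (fun _ => m ^ d.-1)) => [|k0 _].
  by rewrite sum_nat_const card_ord.
by rewrite sum_nat_of_bool card_set_exact_fibers cardsC1 !card_ord.
Qed.

Lemma num_trees_thicken :
  m = e * d -> num_trees ends' = d * (e * d) ^ d.-1 * num_trees ends.
Proof.
move=> m_ed; rewrite num_trees_path num_trees_bundle m_ed.
by case: d d_gt0 => // d' _; rewrite expnS mulnDr addnC; congr (_ + _); ring.
Qed.

End Thickening.

(** * Multigraphs given by edge multiplicities *)

Lemma num_spanning_trees_relabel (N : nat) (c : 'I_N -> 'I_N -> nat)
    (E : finType) (f : E -> edge_t c) :
  injective f -> (forall x, is_edge (f x)) -> (forall t, is_edge t -> exists x, t = f x) ->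
  num_spanning_trees c = num_trees (fun x => (f x).1).
Proof.
move=> f_inj f_edge f_onto.
have tree_imset (T : {set E}) : spanning_tree (f @: T) = is_tree (fun x => (f x).1) T.
  rewrite /spanning_tree /is_tree card_imset // card_ord.
  have -> : f @: T \subset [set t | is_edge t].
    by apply/subsetP => _ /imsetP[x _ ->]; rewrite inE.
  rewrite /=; congr andb; apply: eq_connected => a b.
  apply/existsP/existsP.
    by case=> _ /andP[/imsetP[x xT ->] ab]; exists x; rewrite xT.
  by case=> x /andP[xT ab]; exists (f x); rewrite imset_f.
rewrite /num_spanning_trees /num_trees -(card_imset _ (imset_inj f_inj)).
apply: eq_card => T'; rewrite inE; apply/idP/imsetP => [treeT' | [T treeT ->]]; last first.
  by rewrite tree_imset; rewrite inE in treeT.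
have T'E : T' = f @: (f @^-1: T').
  apply/setP => t; apply/idP/imsetP => [tT' | [x xT' ->]]; last by rewrite inE in xT'.
  case/and3P: treeT' => /subsetP/(_ t tT'); rewrite inE => /f_onto[x tE] _ _.
  by exists x; rewrite // inE -tE.
by exists (f @^-1: T'); rewrite // inE -tree_imset -T'E.
Qed.

Lemma le_mg_bound (N : nat) (c : 'I_N -> 'I_N -> nat) i j : c i j <= mg_bound c.
Proof. exact: (leq_bigmax (i, j)). Qed.

Section OrderedPair.
Variable N : nat.
Implicit Types (x y : 'I_N) (p : 'I_N * 'I_N).

Definition ord_pair x y : 'I_N * 'I_N := if x < y then (x, y) else (y, x).

Lemma joins_ord_pair x y : joins (ord_pair x y) x y.
Proof. by rewrite /ord_pair; case: ifP; rewrite ?joins_refl ?joins_swap. Qed.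

Lemma ord_pair_joins x y : joins (x, y) (ord_pair x y).1 (ord_pair x y).2.
Proof. by rewrite /ord_pair; case: ifP; rewrite ?joins_refl ?joins_swap. Qed.

Lemma ord_pair_lt x y : x != y -> (ord_pair x y).1 < (ord_pair x y).2.
Proof. by rewrite /ord_pair neq_ltn; case: ltnP => //= _ /orP[]. Qed.

Lemma ord_pairE p x y : p.1 < p.2 -> joins p x y -> p = ord_pair x y.
Proof.
case: p => a b /= lt_ab /joinsP[] [-> ->]; rewrite /ord_pair ?lt_ab //.
by rewrite ltnNge ltnW.
Qed.

Lemma ord_pair_sym (c : 'I_N -> 'I_N -> nat) x y :
  (forall i j, c i j = c j i) -> c (ord_pair x y).1 (ord_pair x y).2 = c x y.
Proof. by rewrite /ord_pair; case: ifP. Qed.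

End OrderedPair.

Section Bundle.
Variables (n : nat) (c : 'I_n.+1 -> 'I_n.+1 -> nat) (v v' : 'I_n.+1).
Hypotheses (c_mg : multigraph c) (v'v : v' != v).

Definition rest_edge : Type := {t : edge_t c | is_edge t && ~~ joins t.1 v' v}.

Let c_sym : forall i j, c i j = c j i := c_mg.1.

Lemma bundle_le_mg_bound : c v v' <= mg_bound c.
Proof. exact: le_mg_bound. Qed.

Definition bundle_label (x : rest_edge + 'I_(c v v')) : edge_t c :=
  match x with
  | inl a => val a
  | inr b => (ord_pair v' v, widen_ord bundle_le_mg_bound b)
  end.

Lemma bundle_label_edge x : is_edge (bundle_label x).
Proof.
case: x => [a | b] /=; first by case/andP: (valP a).
by rewrite /is_edge /= ord_pair_lt // ord_pair_sym // (c_sym v') ltn_ord.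
Qed.

Lemma bundle_label_inj : injective bundle_label.
Proof.
have bundle_not_rest (a : rest_edge) b : val a != (ord_pair v' v, b).
  by apply: contraTneq (valP a) => ->; rewrite joins_ord_pair andbF.
move=> [a1 | b1] [a2 | b2] //= => [/val_inj-> // | eq_ab | eq_ab | [/val_inj->] //].
  by case/negP: (bundle_not_rest a1 (widen_ord bundle_le_mg_bound b2)); apply/eqP.
by case/negP: (bundle_not_rest a2 (widen_ord bundle_le_mg_bound b1)); apply/eqP.
Qed.

Lemma bundle_label_onto t : is_edge t -> exists x, t = bundle_label x.
Proof.
move=> t_edge; have [t_bundle | t_rest] := boolP (joins t.1 v' v); last first.
  by exists (inl (exist _ t (introT andP (conj t_edge t_rest)))).
case/andP: t_edge => lt_t lt_j; have t1E := ord_pairE lt_t t_bundle.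
case: t lt_t t_bundle lt_j t1E => [p j] /= _ _ lt_j pE.
rewrite pE ord_pair_sym // (c_sym v') in lt_j.
by exists (inr (Ordinal lt_j)); rewrite /= pE; congr (_, _); apply: val_inj.
Qed.

Lemma num_spanning_trees_bundle :
  num_spanning_trees c = num_trees (fun x => (bundle_label x).1).
Proof.
exact: num_spanning_trees_relabel bundle_label_inj bundle_label_edge bundle_label_onto.
Qed.

End Bundle.

Section ThickenConcrete.
Variables (n : nat) (c : 'I_n.+1 -> 'I_n.+1 -> nat) (v v' : 'I_n.+1) (d : nat).
Hypotheses (c_mg : multigraph c) (v'v : v' != v) (d_gt0 : 0 < d).

Local Notation c' := (thicken c v v' d).
Local Notation tpos := (thick_pos v v' d).

Let c_sym : forall i j, c i j = c j i := c_mg.1.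

Definition old_vertex : 'I_n.+1 -> 'I_(n.+1 + d.-1) := widen_ord (leq_addr d.-1 n.+1).

(* [w_k] for [k <= d], numbered as in [thicken]; [k > d] gives the junk value [v]. *)
Definition path_vertex (k : nat) : 'I_(n.+1 + d.-1) :=
  if k == 0 then old_vertex v' else if k == d then old_vertex v
  else insubd (old_vertex v) (n.+1 + k.-1).

Lemma tpos_old i : tpos (old_vertex i) =
  if i == v' then Some 0 else if i == v then Some d else None.
Proof. by rewrite /thick_pos /= leqNgt ltn_ord. Qed.

Lemma val_path_vertex k : 0 < k < d -> val (path_vertex k) = n.+1 + k.-1.
Proof.
case/andP=> k_gt0 lt_kd; rewrite /path_vertex gtn_eqF // ltn_eqF //.
by rewrite val_insubd ifT //; lia.
Qed.

Lemma path_vertex_d : path_vertex d = old_vertex v.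
Proof. by rewrite /path_vertex gtn_eqF // eqxx. Qed.

Lemma tpos_path k : k <= d -> tpos (path_vertex k) = Some k.
Proof.
move=> le_kd; have [-> | k_gt0] := posnP k; first by rewrite tpos_old eqxx.
have [lt_kd | gt_kd | ->] := ltngtP k d; last first.
- by rewrite path_vertex_d tpos_old eqxx eq_sym (negbTE v'v).
- by move: le_kd; rewrite leqNgt gt_kd.
have le_nk : n.+1 <= path_vertex k by rewrite val_path_vertex ?k_gt0 // leq_addr.
rewrite /thick_pos le_nk !gtn_eqF ?(leq_trans (ltn_ord _) le_nk) //.
by rewrite val_path_vertex ?k_gt0 // addKn prednK.
Qed.

Lemma tpos_some (y : 'I_(n.+1 + d.-1)) a : tpos y = Some a -> a <= d /\ path_vertex a = y.
Proof.
rewrite /thick_pos; case: ifP => [/eqP y_v' [<-] | _]; first by split => //; apply: val_inj.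
case: ifP => [/eqP y_v [<-] | _]; first by rewrite path_vertex_d; split => //; apply: val_inj.
case: ifP => // le_ny [<-]; have lt_yN := ltn_ord y.
have lt_pos : 0 < (y - n.+1).+1 < d by lia.
by split; [lia | apply: val_inj; rewrite val_path_vertex //=; lia].
Qed.

Lemma tpos_none (y : 'I_(n.+1 + d.-1)) :
  tpos y = None -> exists i, [/\ y = old_vertex i, i != v & i != v'].
Proof.
rewrite /thick_pos; case: ifP => // y_v'; case: ifP => // y_v; case: ifP => // le_ny _.
have lt_yn : y < n.+1 by rewrite ltnNge le_ny.
by exists (Ordinal lt_yn); rewrite -!(inj_eq val_inj) /= y_v y_v'; split => //; apply: val_inj.
Qed.

Lemma thicken_old i j : ~~ joins (i, j) v' v -> c' (old_vertex i) (old_vertex j) = c i j.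
Proof.
move=> not_bundle; rewrite /thicken !tpos_old /= !valK.
have [in_i | ] := boolP ((i == v') || (i == v)); last first.
  by rewrite negb_or => /andP[/negbTE-> /negbTE->].
have [in_j | ] := boolP ((j == v') || (j == v)); last first.
  by rewrite negb_or => /andP[/negbTE-> /negbTE->]; case: (i == v'); case: (i == v).
have <- : i = j.
  move: in_i in_j not_bundle; rewrite /joins /=.
  by case/orP=> /eqP-> /orP[] /eqP->; rewrite ?eqxx ?orbT.
by rewrite c_mg.2; case: (i == v'); case: (i == v); rewrite //= (gtn_eqF (ltnSn d)).
Qed.

Lemma tpos_old_some i a : tpos (old_vertex i) = Some a -> i = v' /\ a = 0 \/ i = v /\ a = d.
Proof.
rewrite tpos_old; have [-> [<-] | _] := eqVneq i v'; first by left.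
by have [-> [<-] | //] := eqVneq i v; right.
Qed.

Lemma thicken_path k x y : k < d ->
  joins (path_vertex k, path_vertex k.+1) x y -> c' x y = c v v' * d.
Proof.
move=> lt_kd /joinsP[] [-> ->];
  by rewrite /thicken !tpos_path ?(ltnW lt_kd) // eqxx ?orbT.
Qed.

Lemma old_pair_on_path i j k : k < d ->
  joins (path_vertex k, path_vertex k.+1) (old_vertex i) (old_vertex j) ->
  joins (i, j) v' v.
Proof.
move=> lt_kd /joinsP[] [ei ej].
- have := tpos_path (ltnW lt_kd); rewrite -ei => /tpos_old_some[[-> k0] | [_ kd]]; last first.
    by rewrite kd ltnn in lt_kd.
  have := tpos_path lt_kd; rewrite -ej => /tpos_old_some[[_ //] | [-> _]].
  exact: joins_refl.
- have := tpos_path (ltnW lt_kd); rewrite -ej => /tpos_old_some[[-> k0] | [_ kd]]; last first.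
    by rewrite kd ltnn in lt_kd.
  have := tpos_path lt_kd; rewrite -ei => /tpos_old_some[[_ //] | [-> _]].
  exact: joins_swap.
Qed.

Lemma thicken_edge_cases x y : 0 < c' x y ->
  (exists i j, [/\ x = old_vertex i, y = old_vertex j & ~~ joins (i, j) v' v]) \/
  (exists k, k < d /\ joins (path_vertex k, path_vertex k.+1) x y).
Proof.
have insub_old i : insub (val (old_vertex i)) = Some i by rewrite /= valK.
have not_bundle i j : j != v -> j != v' -> ~~ joins (i, j) v' v /\ ~~ joins (j, i) v' v.
  by move=> /negbTE jv /negbTE jv'; rewrite /joins /= jv jv' !andbF.
rewrite /thicken; case tx: (tpos x) => [a|]; case ty: (tpos y) => [b|].
- have [le_ad <-] := tpos_some tx; have [le_bd <-] := tpos_some ty.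
  case: ifP => // /orP[] /eqP ab _; right; [exists a | exists b]; rewrite -ab.
  + by rewrite joins_refl; split => //; rewrite ab.
  + by rewrite joins_swap; split => //; rewrite ab.
- have [j [-> jv jv']] := tpos_none ty; rewrite insub_old.
  case: insubP => [i _ xi|] // _; left; exists i, j; have [nb_ij _] := not_bundle i j jv jv'.
  by split=> //; apply: val_inj; rewrite /= -xi.
- have [i [-> iv iv']] := tpos_none tx; rewrite insub_old.
  case: insubP => [j _ yj|] // _; left; exists i, j; have [_ nb_ij] := not_bundle j i iv iv'.
  by split=> //; apply: val_inj; rewrite /= -yj.
- have [i [-> iv iv']] := tpos_none tx; have [j [-> _ _]] := tpos_none ty.
  by rewrite !insub_old => _; left; exists i, j; have [_ nb_ij] := not_bundle j i iv iv'.
Qed.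

Lemma path_vertex_neq k : k < d -> path_vertex k != path_vertex k.+1.
Proof.
move=> lt_kd; apply/eqP => e_k.
have := congr1 (fun y : 'I_(n.+1 + d.-1) => tpos y) e_k.
by rewrite /= !tpos_path ?(ltnW lt_kd) // => -[/eqP]; rewrite ltn_eqF.
Qed.

Lemma path_pair_pos k : k < d ->
  minn (odflt 0 (tpos (ord_pair (path_vertex k) (path_vertex k.+1)).1))
       (odflt 0 (tpos (ord_pair (path_vertex k) (path_vertex k.+1)).2)) = k.
Proof.
move=> lt_kd; rewrite /ord_pair; case: ifP => _ /=; rewrite !tpos_path ?(ltnW lt_kd) //=.
  exact/minn_idPl/leqnSn.
exact/minn_idPr/leqnSn.
Qed.

Lemma path_bundle_le_mg_bound : c v v' * d <= mg_bound c'.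
Proof.
rewrite -(thicken_path d_gt0 (joins_refl (path_vertex 0) (path_vertex 1))).
exact: le_mg_bound.
Qed.

Lemma mg_bound_le_thicken : mg_bound c <= mg_bound c'.
Proof.
apply/bigmax_leqP => -[i j] _ /=.
have [bundle | not_bundle] := boolP (joins (i, j) v' v); last first.
  by rewrite -thicken_old //; apply: le_mg_bound.
apply: leq_trans path_bundle_le_mg_bound.
by case/joinsP: bundle => -[-> ->]; rewrite 1?c_sym leq_pmulr.
Qed.

Definition path_label (x : rest_edge c v v' + 'I_d * 'I_(c v v' * d)) : edge_t c' :=
  match x with
  | inl a => ((old_vertex (val a).1.1, old_vertex (val a).1.2),
              widen_ord mg_bound_le_thicken (val a).2)
  | inr kj => (ord_pair (path_vertex kj.1) (path_vertex kj.1.+1),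
               widen_ord path_bundle_le_mg_bound kj.2)
  end.

Lemma path_label_edge x : is_edge (path_label x).
Proof.
case: x => [a | [k j]] /=.
  by case/andP: (valP a) => /andP[lt_a lt_j] not_bundle; rewrite /is_edge /= lt_a thicken_old.
rewrite /is_edge /= ord_pair_lt ?path_vertex_neq //.
by rewrite (thicken_path (ltn_ord k) (ord_pair_joins _ _)) ltn_ord.
Qed.

Lemma path_label_inj : injective path_label.
Proof.
have rest_off_path (a : rest_edge c v v') (k : 'I_d) :
    (old_vertex (val a).1.1, old_vertex (val a).1.2) !=
    ord_pair (path_vertex k) (path_vertex k.+1).
  apply/eqP => e_ak; case/andP: (valP a) => _ /negP; apply.
  apply: (old_pair_on_path (ltn_ord k)).
  by have := ord_pair_joins (path_vertex k) (path_vertex k.+1); rewrite -e_ak.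
move=> [a1 | [k1 j1]] [a2 | [k2 j2]] /= eq12.
- case: eq12 => e1 e2 e3; congr inl; apply: val_inj.
  by move: a1 a2 e1 e2 e3 => [[[? ?] ?] ?] [[[? ?] ?] ?] /= /val_inj-> /val_inj-> /val_inj->.
- by case: eq12 => e1 _; case/negP: (rest_off_path a1 k2); apply/eqP.
- by case: eq12 => e1 _; case/negP: (rest_off_path a2 k1); apply/eqP.
case: eq12 => e12 /val_inj->.
have := path_pair_pos (ltn_ord k1); rewrite e12 path_pair_pos // => /val_inj->.
by [].
Qed.

Lemma path_label_onto t : is_edge t -> exists x, t = path_label x.
Proof.
case: t => [[x y] j] /andP[/= lt_xy lt_j].
have /thicken_edge_cases[[i [i' [xi yi' not_bundle]]] | [k [lt_kd kxy]]] : 0 < c' x y.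
  exact: leq_ltn_trans lt_j.
- rewrite xi yi' thicken_old // in lt_j.
  have lt_jb : j < mg_bound c by apply: leq_trans lt_j (le_mg_bound _ _ _).
  have a_rest : is_edge ((i, i'), Ordinal lt_jb) && ~~ joins (i, i') v' v.
    have lt_ii' : i < i' by move: lt_xy; rewrite xi yi'.
    by rewrite /is_edge /= lt_ii' lt_j not_bundle.
  exists (inl (exist (fun t : edge_t c => is_edge t && ~~ joins t.1 v' v) _ a_rest)).
  by rewrite /= -xi -yi'; congr (_, _); apply: val_inj.
rewrite (thicken_path lt_kd kxy) in lt_j.
exists (inr (Ordinal lt_kd, Ordinal lt_j)); congr (_, _); last exact: val_inj.
by apply: ord_pairE; rewrite // -joins_pairC.
Qed.

Lemma num_spanning_trees_path :
  num_spanning_trees c' = num_trees (fun x => (path_label x).1).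
Proof. exact: num_spanning_trees_relabel path_label_inj path_label_edge path_label_onto. Qed.

Definition old_of (y : 'I_(n.+1 + d.-1)) : 'I_n.+1 := insubd v (val y).

Lemma old_vertexK : cancel old_vertex old_of.
Proof. by move=> i; apply: val_inj; rewrite val_insubd /= ltn_ord. Qed.

Lemma new_vertex_on_path y : old_vertex (old_of y) != y ->
  0 < odflt 0 (tpos y) < d /\ path_vertex (odflt 0 (tpos y)) = y.
Proof.
move=> y_new; have le_ny : n.+1 <= y.
  rewrite leqNgt; apply: contra y_new => lt_yn; apply/eqP/val_inj.
  by rewrite /= val_insubd lt_yn.
have tpos_y : tpos y = Some (y - n.+1).+1.
  by rewrite /thick_pos le_ny !gtn_eqF ?(leq_trans (ltn_ord _) le_ny).
rewrite tpos_y /=; split; last by case: (tpos_some tpos_y).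
by have := ltn_ord y; lia.
Qed.

Lemma path_vertex_new k : 0 < k < d ->
  old_vertex (old_of (path_vertex k)) != path_vertex k /\ odflt 0 (tpos (path_vertex k)) = k.
Proof.
move=> lt_kd; rewrite tpos_path; last by case/andP: lt_kd => _ /ltnW.
split=> //; apply/eqP => /(congr1 val); rewrite /= val_path_vertex //.
by have := ltn_ord (old_of (path_vertex k)); lia.
Qed.

End ThickenConcrete.

Lemma num_spanning_trees_thicken n (c : 'I_n.+1 -> 'I_n.+1 -> nat) (v v' : 'I_n.+1) d :
  multigraph c -> v' != v -> 0 < d -> 0 < c v v' ->
  num_spanning_trees (thicken c v v' d) = d * (c v v' * d) ^ d.-1 * num_spanning_trees c.
Proof.
move=> c_mg v'v d_gt0 e_gt0.
rewrite (num_spanning_trees_path c_mg v'v d_gt0) (num_spanning_trees_bundle c_mg v'v).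
apply: (num_trees_thicken (u := v) (u' := v')
  (ends_rest := fun a : rest_edge c v v' => (val a).1)
  (emb := old_vertex d) (emb_inv := @old_of n v d)
  (w := path_vertex v v' d) (pos := fun y => odflt 0 (thick_pos v v' d y))) => //.
- exact: old_vertexK.
- exact: path_vertex_d.
- exact: new_vertex_on_path.
- exact: path_vertex_new.
- by move=> b; apply: joins_ord_pair.
- by move=> k j; apply: joins_ord_pair.
- by rewrite !card_ord.
Qed.

Import Order.TTheory GRing.Theory Num.Theory.
Local Open Scope ring_scope.

Theorem mainTheorem5 (n : nat) (c : 'I_n.+1 -> 'I_n.+1 -> nat)
    (vi vj : 'I_n.+1) (h : nat) (S : 'cV[int]_n.+1)
    (v v' : 'I_n.+1) (e : nat) :
  multigraph c -> mg_connected c ->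
  vi != vj -> (0 < h)%N ->
  lapM c *m S = h%:Z *: \col_k ((k == vi)%:Z - (k == vj)%:Z) ->
  (\big[gcdn/0%N]_(k < n.+1) `|S k ord0 - S ord_max ord0|%N)%N = 1%N ->
  c v v' = e -> (1 <= e)%N ->
  S v' ord0 < S v ord0 ->
  let s := `|S v ord0 - S v' ord0|%N in
  num_spanning_trees (thicken c v v' s)
    = (s * (e * s) ^ s.-1 * num_spanning_trees c)%N.
Proof.
move=> c_mg _ _ _ _ _ c_vv' e_gt0 lt_S s.
have v'v : v' != v by apply: contraTneq lt_S => ->; rewrite ltxx.
have s_gt0 : (0 < s)%N by rewrite absz_gt0 subr_eq0 (gt_eqF lt_S).
by rewrite num_spanning_trees_thicken // c_vv'.
Qed.
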